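(* Let $\mathcal{I}$ be an independent configuration of $d$ doors in which all doors have the same fundamental distribution, and let $A_{\mathrm{simp}}=(1,2,\dots,d)^\infty$. Then $\mathbb{T}_{\mathcal{I}}(A_{\mathrm{simp}})=\Theta(\mathbb{T}_{\mathcal{I}})$, with universal constants.
   Context: Doors $1,\dots,d$ ($d\ge2$) are initially closed and stay open once opened. In an independent configuration with common fundamental distribution $p$, doors behave mutually independently and each door is still closed after $n$ knocks on it with probability $p(n)$ ($p(0)=1$, $p$ non-increasing, $\sum_n p(n)<\infty$). A knock sequence is an infinite sequence of door indices executed in order without any feedback; $\mathbb{T}_{\mathcal{I}}(\pi)$ is the expected number of knocks until all doors are open when running $\pi$, and $\mathbb{T}_{\mathcal{I}}=\inf_\pi\mathbb{T}_{\mathcal{I}}(\pi)$. $A_{\mathrm{simp}}$ is the sequence $1,2,\dots,d,1,2,\dots,d,\dots$. *)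

From HB Require Import structures.
From mathcomp Require Import all_boot all_order all_algebra.
From mathcomp Require Import all_classical all_reals all_analysis.
Set Implicit Arguments. Unset Strict Implicit. Unset Printing Implicit Defensive.
Import Order.TTheory GRing.Theory Num.Theory.
Local Open Scope ring_scope.
Local Open Scope classical_set_scope.

(* Doors are indexed by 'I_d (door k+1 of the paper is ordinal k).
   A knock sequence is an infinite sequence of door indices. *)
Definition knock_seq (d : nat) := nat -> 'I_d.

Definition knocks (d : nat) (pi : knock_seq d) (i : 'I_d) (t : nat) : nat :=
  \sum_(s < t) (pi s == i).

(* Fundamental distribution: p n = probability that a door is still closed
   after n knocks on it. *)
Definition fundamental_distribution (R : realType) (p : nat -> R) : Prop :=
  p 0%N = 1 /\ (forall n, 0 <= p n <= 1) /\ (forall m n, (m <= n)%N -> p n <= p m)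
  /\ (\sum_(0 <= n <oo) (p n)%:E < +oo)%E.

(* In the independent configuration with common fundamental distribution p,
   the probability that all doors are open after the first t knocks of pi is
   \prod_i (1 - p (knocks pi i t)); the stopping time T satisfies T > t iff
   not all doors are open after t knocks, so E[T] = \sum_t P(T > t). *)
Definition expected_time (R : realType) (d : nat) (p : nat -> R)
    (pi : knock_seq d) : \bar R :=
  (\sum_(0 <= t <oo) ((1 - \prod_(i < d) (1 - p (knocks pi i t)))%:E))%E.

Definition opt_time (R : realType) (d : nat) (p : nat -> R) : \bar R :=
  ereal_inf [set expected_time p pi | pi in [set: knock_seq d]].

Definition Asimp (d : nat) (hd : (0 < d)%N) : knock_seq d :=
  fun t => Ordinal (ltn_pmod t hd).

From HB Require Import structures.
From mathcomp Require Import all_boot all_order all_algebra.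
From mathcomp Require Import all_classical all_reals all_analysis.
From mathcomp Require Import lra zify.
From Stdlib Require Import Lia.
Import Order.TTheory GRing.Theory Num.Theory.
Local Open Scope ring_scope.

(* Write [P(T > t)] for the probability that some door is still closed after
   [t] knocks.  Compare [A_simp] at time [t >= 2s] with any sequence [pi] at
   time [s], and let [M = 2s/d].  Under [A_simp] every door has had at least
   [M] knocks, so by the union bound [P(T_simp > t) <= min(1, d p(M))].
   Under [pi] more than [d/2] doors have had at most [M] knocks (Markov), so
   with [h > d/2] such doors [P(T_pi > s) >= 1 - (1 - p(M))^h >= z/(1+z)] for
   [z = h p(M)], and [min(1, 2z) <= 3z/(1+z)].  Hence
   [P(T_simp > t) <= 3 P(T_pi > s)] whenever [2s <= t], and summing over [t]
   gives [E T_simp <= 6 E T_pi]. *)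

Section RealInequalities.
Context {R : realFieldType}.

Lemma prod_one_sub_ge0_le1 {I : finType} (x : I -> R) :
  (forall i, 0 <= x i <= 1) -> 0 <= \prod_i (1 - x i) <= 1.
Proof.
move=> x01; apply/andP; split.
  by apply: prodr_ge0 => i _; have /andP[_ ?] := x01 i; lra.
by apply: prodr_ile1 => i _; have /andP[? ?] := x01 i; lra.
Qed.

Lemma one_sub_prod_one_sub_le_sum {I : finType} (x : I -> R) :
  (forall i, 0 <= x i <= 1) -> 1 - \prod_i (1 - x i) <= \sum_i x i.
Proof.
move=> x01.
suff [] : 0 <= \prod_i (1 - x i) <= 1 /\ 1 - \prod_i (1 - x i) <= \sum_i x i by [].
apply: (big_rec2 (fun P S : R => 0 <= P <= 1 /\ 1 - P <= S)).
  by split; [rewrite ler01 lexx | rewrite subrr].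
move=> i P S _ [/andP[P0 P1] PS]; have /andP[? ?] := x01 i.
by split; [apply/andP; split|]; nra.
Qed.

Lemma one_sub_expr_mul_le1 (y : R) (h : nat) :
  0 <= y <= 1 -> (1 - y) ^+ h * (1 + h%:R * y) <= 1.
Proof.
move=> /andP[y0 y1]; elim: h => [|h IH]; first by rewrite expr0 mul0r addr0 mul1r.
have q0 : 0 <= (1 - y) ^+ h by apply: exprn_ge0; lra.
have h0 : 0 <= h%:R :> R by rewrite ler0n.
rewrite exprSr -mulrA; apply: le_trans IH; apply: ler_wpM2l => //.
rewrite -natr1; nra.
Qed.

(* [a <= min(1, 2z) <= 3z/(1+z) <= 3b]; the middle step splits at [z = 1/2]. *)
Lemma le_three_mul_of_min (a b z : R) :
  0 <= z -> a <= 1 -> a <= 2 * z -> (1 - b) * (1 + z) <= 1 -> a <= 3 * b.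
Proof.
move=> z0 a1 a2z bz.
have az : a * (1 + z) <= 3 * z.
  have : 0 <= (2 * z - a) * z by apply: mulr_ge0; lra.
  have : 0 <= (1 - a) * (1 + z) by apply: mulr_ge0; lra.
  case: (lerP (2 * z) 1) => ?; last by nra.
  have : 0 <= z * (1 - 2 * z) by apply: mulr_ge0; lra.
  nra.
have : a * (1 + z) <= (3 * b) * (1 + z) by nra.
by rewrite ler_pM2r //; lra.
Qed.

End RealInequalities.

Lemma card_le_twice_mean {T : finType} (k : T -> nat) : (0 < #|T|)%N ->
  (#|T| < 2 * #|[pred i | k i * #|T| <= 2 * \sum_j k j]|)%N.
Proof.
move=> T0; set S := (\sum_j k j)%N; set small := [pred i | _].
set c := #|[predC small]|; have hc : (#|small| + c)%N = #|T| := cardC small.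
have cS : (c * (2 * S).+1 <= S * #|T|)%N.
  rewrite big_distrl (bigID small) /=; apply: leq_trans (leq_addl _ _).
  rewrite -sum_nat_const; apply: leq_sum => i.
  by rewrite !inE ltnNge.
rewrite ltnNge; apply/negP => small_le.
have : (#|T| * (2 * S).+1 <= 2 * c * (2 * S).+1)%N.
  by rewrite leq_mul2r; apply/orP; right; lia.
nia.
Qed.

Section Knocks.
Context {d : nat}.
Implicit Types (pi : knock_seq d) (i : 'I_d).

Lemma knocks_addn pi i t u :
  knocks pi i (t + u) = (knocks pi i t + \sum_(s < u) (pi (t + s)%N == i))%N.
Proof. by rewrite /knocks big_split_ord. Qed.

Lemma leq_knocks pi i t t' : (t <= t')%N -> (knocks pi i t <= knocks pi i t')%N.
Proof. by move=> /subnKC <-; rewrite knocks_addn leq_addr. Qed.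

Lemma sum_knocks pi t : (\sum_i knocks pi i t)%N = t.
Proof.
rewrite /knocks exchange_big /= -[t in RHS]card_ord -sum1_card.
apply: eq_bigr => s _; rewrite (bigD1 (pi s)) //= eqxx big1 // => j /negbTE.
by rewrite eq_sym => ->.
Qed.

Lemma Asimp_knocks_ge (hd : (0 < d)%N) i t : (t %/ d <= knocks (Asimp hd) i t)%N.
Proof.
have round_ge m : (m <= knocks (Asimp hd) i (m * d))%N.
  elim: m => [|m IH] //; rewrite mulSn addnC knocks_addn -addn1 leq_add //.
  rewrite (bigD1 i) //= (_ : Asimp hd (m * d + i) = i) ?eqxx //.
  by apply: val_inj; rewrite /= modnMDl modn_small.
exact: leq_trans (round_ge (t %/ d)%N) (leq_knocks _ _ _ _ (leq_divM t d)).
Qed.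

End Knocks.

Lemma nneseries_le_of_le_at_half (R : realType) (c : R) (a b : nat -> R) :
  0 <= c -> (forall t, 0 <= a t) -> (forall s, 0 <= b s) ->
  (forall s t, (s.*2 <= t)%N -> a t <= c * b s) ->
  (\sum_(0 <= t <oo) (a t)%:E <= (2 * c)%:E * \sum_(0 <= s <oo) (b s)%:E)%E.
Proof.
move=> c0 a0 b0 ab.
have double_partial n : \sum_(0 <= t < n.*2) a t <= 2 * c * \sum_(0 <= s < n) b s.
  elim: n => [|n IH]; first by rewrite !big_geq // mulr0.
  rewrite doubleS !big_nat_recr //= mulrDr.
  by have := ab n n.*2 (leqnn _); have := ab n n.*2.+1 (leqnSn _); lra.
have partial n : \sum_(0 <= t < n) a t <= 2 * c * \sum_(0 <= s < n) b s.
  apply: le_trans (double_partial n).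
  rewrite (@big_cat_nat _ _ _ n 0 n.*2) //= ?lerDl ?sumr_ge0 //.
  by rewrite -addnn leq_addr.
apply: lime_le; first by apply: is_cvg_nneseries => n _ _; rewrite lee_fin.
apply: nearW => n /=; rewrite sumEFin.
apply: (@le_trans _ _ (2 * c * \sum_(0 <= s < n) b s)%:E); first by rewrite lee_fin.
rewrite EFinM; apply: lee_wpmul2l; first by rewrite lee_fin mulr_ge0.
by rewrite -sumEFin; apply: nneseries_lim_ge => i _ _; rewrite lee_fin.
Qed.

Section TailProbability.
Variables (R : realType) (d : nat) (p : nat -> R).
Hypothesis p01 : forall n, 0 <= p n <= 1.
Hypothesis p_nonincr : forall m n, (m <= n)%N -> p n <= p m.
Implicit Types (pi : knock_seq d).

Definition tail_prob (pi : knock_seq d) (t : nat) : R :=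
  1 - \prod_(i < d) (1 - p (knocks pi i t)).

Lemma expected_timeE pi : expected_time p pi = (\sum_(0 <= t <oo) (tail_prob pi t)%:E)%E.
Proof. by []. Qed.

Lemma tail_prob_ge0_le1 pi t : 0 <= tail_prob pi t <= 1.
Proof.
have /andP[? ?] := prod_one_sub_ge0_le1 (fun i => p (knocks pi i t)) (fun i => p01 _).
by rewrite /tail_prob; apply/andP; split; lra.
Qed.

Lemma tail_prob_Asimp_le (hd : (0 < d)%N) t M : (M * d <= t)%N ->
  tail_prob (Asimp hd) t <= d%:R * p M.
Proof.
move=> Mdt; apply: le_trans (one_sub_prod_one_sub_le_sum _ (fun i => p01 _)) _.
rewrite (_ : d%:R * p M = \sum_(i < d) p M); last first.
  by rewrite sumr_const card_ord mulr_natl.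
apply: ler_sum => i _; apply: p_nonincr.
by apply: leq_trans _ (Asimp_knocks_ge hd i t); rewrite leq_divRL.
Qed.

Lemma tail_prob_ge pi s M :
  1 - (1 - p M) ^+ #|[pred i | (knocks pi i s <= M)%N]| <= tail_prob pi s.
Proof.
set small := [pred i | _]; rewrite /tail_prob lerD2l lerN2 (bigID small) /=.
have factor01 i : 0 <= 1 - p (knocks pi i s) <= 1.
  by have /andP[? ?] := p01 (knocks pi i s); apply/andP; split; lra.
set P := \prod_(i < d | small i) _; set Q := \prod_(i < d | ~~ small i) _.
have /andP[Q0 Q1] : 0 <= Q <= 1.
  by apply/andP; split; [apply: prodr_ge0 | apply: prodr_ile1] => i _;
    have /andP[] := factor01 i.
have P0 : 0 <= P by apply: prodr_ge0 => i _; have /andP[] := factor01 i.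
have : P <= (1 - p M) ^+ #|small|.
  rewrite -prodr_const; apply: ler_prod => i small_i.
  have /andP[-> _] := factor01 i.
  by rewrite lerD2l lerN2 p_nonincr.
nra.
Qed.

Lemma tail_prob_Asimp_le_three (hd : (0 < d)%N) pi s t : (s.*2 <= t)%N ->
  tail_prob (Asimp hd) t <= 3 * tail_prob pi s.
Proof.
move=> st; set M := (s.*2 %/ d)%N; set y := p M.
set h := #|[pred i | (knocks pi i s <= M)%N]|.
have h_large : d%:R <= 2 * h%:R :> R.
  rewrite -natrM ler_nat ltnW //.
  have := card_le_twice_mean (fun i => knocks pi i s); rewrite card_ord sum_knocks.
  rewrite (eq_card (B := [pred i | (knocks pi i s <= M)%N])) => [->//|i].
  by rewrite !inE leq_divRL // mul2n.
have /andP[y0 y1] := p01 M; have h0 : 0 <= h%:R :> R by rewrite ler0n.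
apply: (@le_three_mul_of_min _ _ _ (h%:R * y)); first exact: mulr_ge0.
- by have /andP[] := tail_prob_ge0_le1 (Asimp hd) t.
- apply: le_trans (tail_prob_Asimp_le hd _ _ (leq_trans (leq_divM _ _) st)) _.
  by rewrite mulrA ler_wpM2r.
- apply: le_trans _ (one_sub_expr_mul_le1 _ h (p01 M)).
  rewrite ler_wpM2r ?addr_ge0 ?mulr_ge0 //.
  by have := tail_prob_ge pi s M; lra.
Qed.

Lemma expected_time_Asimp_le (hd : (0 < d)%N) pi :
  (expected_time p (Asimp hd) <= 6%:E * expected_time p pi)%E.
Proof.
rewrite !expected_timeE (_ : 6 = 2 * 3); last by rewrite -natrM.
apply: nneseries_le_of_le_at_half => //.
- by move=> t; have /andP[] := tail_prob_ge0_le1 (Asimp hd) t.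
- by move=> s; have /andP[] := tail_prob_ge0_le1 pi s.
- by move=> s t; apply: tail_prob_Asimp_le_three.
Qed.

End TailProbability.

Theorem mainTheorem4 (R : realType) :
  exists c1 c2 : R, 0 < c1 /\ 0 < c2 /\
    forall (d : nat) (hd : (1 < d)%N) (p : nat -> R),
      fundamental_distribution p ->
      (c1%:E * opt_time d p <= expected_time p (Asimp (ltnW hd)))%E /\
      (expected_time p (Asimp (ltnW hd)) <= c2%:E * opt_time d p)%E.
Proof.
exists 1, 6; do 2!split => //.
move=> d hd p [_ [p01 [p_nonincr _]]]; split.
  by rewrite mul1e; apply: ereal_inf_lbound; exists (Asimp (ltnW hd)).
rewrite -lee_pdivrMl //; apply: le_ereal_inf_tmp => _ [pi _ <-].
by rewrite lee_pdivrMl // expected_time_Asimp_le.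
Qed.
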